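(* Assume $A$ contains at least one prime element and that $U(A)$ is finite. Then for every $x\in A\setminus(U(A)\cup\{0\})$ such that $\mathcal D(x)$ is finite, there exist a prime element $p$ of $A$, an integer $n\ge1$ and $a\in A\setminus\{0\}$ such that $x=ap^n$ and $\gcd(a,p)=1$ (i.e. $p\nmid a$).
   Context: Let $\mathbb F$ be a subfield of $\mathbb C$ with a norm (absolute value) $\|\cdot\|_{\mathbb F}$, and $A$ a subring of $\mathbb F$ containing $1$ (hence an integral domain). $U(A)$ is the unit group of $A$; $d\mid x$ means $x=dc$ for some $c\in A$; $\mathcal D(x)=\{d\in A:d\mid x\}$; $xU(A)=\{xu:u\in U(A)\}$. $N:A\to\mathbb F\cap\mathbb R$ is a map with $N(a)\neq0$ for all nonzero $a\in A$ and satisfying: for all $x\in A$, $N(x)\in A$, $\mathcal D(N(x))=\mathcal D(x)$ and $N(N(x))=N(x)$; for all $x,y\in A$ there is $z\in A$ with $N(x)+N(y)=N(z)$; $N(-x)=N(x)$; $N(xy)=N(x)N(y)$; $\|N(x)\|_{\mathbb F}=N(x)$; for every $x\ne0$ there is $x'\in\mathbb F\cap\mathbb R$ with $N(x)^2=xx'\in A$. An element $p\in A$ is irreducible if $p\notin U(A)\cup\{0\}$ and $\mathcal D(p)=U(A)\cup pU(A)$; it is prime if it is irreducible and $N(p)=p$. For a prime $p$ and $a\in A$, $\gcd(a,p)=1$ means $p\nmid a$. *)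

(* The ambient field C is an arbitrary numClosedFieldType
   (the complex numbers are one). *)
From HB Require Import structures.
From mathcomp Require Import all_boot all_order all_algebra.
Set Implicit Arguments. Unset Strict Implicit. Unset Printing Implicit Defensive.
Import Order.TTheory GRing.Theory Num.Theory.
Local Open Scope ring_scope.

Section Defs.
Variable C : numClosedFieldType.

Definition is_subfield (F : pred C) : Prop :=
  0 \in F /\ 1 \in F /\
  (forall x y, x \in F -> y \in F -> x + y \in F) /\
  (forall x, x \in F -> - x \in F) /\
  (forall x y, x \in F -> y \in F -> x * y \in F) /\
  (forall x, x \in F -> x != 0 -> x^-1 \in F).

Definition is_abs_value (F : pred C) (nrm : C -> C) : Prop :=
  (forall x, x \in F -> 0 <= nrm x) /\
  (forall x, x \in F -> (nrm x == 0) = (x == 0)) /\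
  (forall x y, x \in F -> y \in F -> nrm (x * y) = nrm x * nrm y) /\
  (forall x y, x \in F -> y \in F -> nrm (x + y) <= nrm x + nrm y).

Definition is_subring_of (F A : pred C) : Prop :=
  (forall x, x \in A -> x \in F) /\ 0 \in A /\ 1 \in A /\
  (forall x y, x \in A -> y \in A -> x + y \in A) /\
  (forall x, x \in A -> - x \in A) /\
  (forall x y, x \in A -> y \in A -> x * y \in A).

Definition unitA (A : pred C) (u : C) : Prop :=
  u \in A /\ exists v, v \in A /\ u * v = 1.

Definition dvdA (A : pred C) (d x : C) : Prop :=
  exists c, c \in A /\ x = d * c.

Definition finite_set (P : C -> Prop) : Prop :=
  exists s : seq C, forall d, P d -> d \in s.

Definition divisorsA (A : pred C) (x : C) : C -> Prop :=
  fun d => d \in A /\ dvdA A d x.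

Definition irreducibleA (A : pred C) (p : C) : Prop :=
  p \in A /\ ~ unitA A p /\ p <> 0 /\
  (forall d, divisorsA A p d <-> (unitA A d \/ exists u, unitA A u /\ d = p * u)).

Definition primeA (A : pred C) (N : C -> C) (p : C) : Prop :=
  irreducibleA A p /\ N p = p.

Definition is_N (F A : pred C) (nrm N : C -> C) : Prop :=
  (forall x, x \in A -> N x \in F /\ N x \is Num.real) /\
  (forall x, x \in A -> x != 0 -> N x != 0) /\
  (forall x, x \in A -> N x \in A) /\
  (forall x, x \in A -> forall d, divisorsA A (N x) d <-> divisorsA A x d) /\
  (forall x, x \in A -> N (N x) = N x) /\
  (forall x y, x \in A -> y \in A -> exists z, z \in A /\ N x + N y = N z) /\
  (forall x, x \in A -> N (- x) = N x) /\
  (forall x y, x \in A -> y \in A -> N (x * y) = N x * N y) /\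
  (forall x, x \in A -> nrm (N x) = N x) /\
  (forall x, x \in A -> x != 0 ->
     exists x', x' \in F /\ x' \is Num.real /\ N x ^+ 2 = x * x' /\ x * x' \in A).

Definition setting (F : pred C) (nrm : C -> C) (A : pred C) (N : C -> C) : Prop :=
  is_subfield F /\ is_abs_value F nrm /\ is_subring_of F A /\ is_N F A nrm N.

End Defs.

From HB Require Import structures.
From mathcomp Require Import all_boot all_order all_algebra.
From Stdlib Require Import Classical.
From mathcomp Require Import zify.
Import Order.TTheory GRing.Theory Num.Theory.
Local Open Scope ring_scope.

(* Divisibility basics in A: reflexivity, transitivity, and the fact that
      two elements dividing each other differ by a unit.
   2. Irreducible divisors: a nonzero nonunit d which is not irreducible has
      a nonunit divisor e not divisible by d, and D(e) misses d; so when D(d)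
      is finite, descending along such divisors terminates in an irreducible
      divisor of d.
   3. Irreducibility only depends on the set of divisors, hence N(q) is
      irreducible whenever q is, and N(q) is then prime since N(N(q)) = N(q).
   4. The powers of a nonzero nonunit p are pairwise distinct, so only
      finitely many of them divide x when D(x) is finite: there is a largest
      n with p^n | x.
   Corollary 5.4 follows with p = N(q) for an irreducible divisor q of x and
   n the exponent of p in x; the cofactor a = x / p^n is not divisible by p,
   and n >= 1 because p | x. *)

Section Divisibility.
Context {C : numClosedFieldType} {A : pred C}.
Hypothesis A1 : 1 \in A.
Hypothesis mulA : forall x y, x \in A -> y \in A -> x * y \in A.

Lemma dvdA_refl {d : C} : dvdA A d d.
Proof. by exists 1; rewrite mulr1. Qed.

Lemma dvdA_trans {a b c : C} : dvdA A a b -> dvdA A b c -> dvdA A a c.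
Proof.
move=> [c1 [c1A ->]] [c2 [c2A ->]]; exists (c1 * c2); split; first exact: mulA.
by rewrite mulrA.
Qed.

Lemma divisorsA_refl {d : C} : d \in A -> divisorsA A d d.
Proof. by move=> dA; split=> //; apply: dvdA_refl. Qed.

Lemma dvdA_neq0 {e d : C} : dvdA A e d -> d <> 0 -> e <> 0.
Proof. by move=> [c [_ ->]] dn0 e0; apply: dn0; rewrite e0 mul0r. Qed.

Lemma unitA_mul {a b : C} : unitA A a -> unitA A b -> unitA A (a * b).
Proof.
move=> [aA [a' [a'A aa']]] [bA [b' [b'A bb']]]; split; first exact: mulA.
exists (a' * b'); split; first exact: mulA.
by rewrite mulrACA aa' bb' mulr1.
Qed.

Lemma unitA_dvd {a b : C} : a \in A -> dvdA A a b -> unitA A b -> unitA A a.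
Proof.
move=> aA [c [cA ->]] [_ [v [vA abv]]]; split=> //.
by exists (c * v); split; [exact: mulA | rewrite mulrA].
Qed.

Lemma associate_unit {a b u v : C} :
  a <> 0 -> u \in A -> v \in A -> a = b * u -> b = a * v -> unitA A u.
Proof.
move=> an0 uA vA abu bav; split=> //; exists v; split=> //.
apply: (mulfI (x := a)); first exact/eqP.
by rewrite mulr1 [u * v]mulrC mulrA -bav -abu.
Qed.

(* Units and associates of d always divide d: irreducibility of d only
   asks for the converse inclusion. *)
Lemma trivial_divisorsA {d e : C} : d \in A ->
  (unitA A e \/ exists u, unitA A u /\ e = d * u) -> divisorsA A d e.
Proof.
move=> dA [[eA [v [vA ev]]] | [u [[uA [v [vA uv]]] ->]]].
  split=> //; exists (v * d); split; first exact: mulA.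
  by rewrite mulrA ev mul1r.
split; first exact: mulA.
by exists v; split=> //; rewrite -mulrA uv mulr1.
Qed.

Lemma proper_divisorA {d : C} : d \in A -> ~ unitA A d -> d <> 0 ->
  ~ irreducibleA A d ->
  exists e, divisorsA A d e /\ ~ unitA A e /\ ~ dvdA A d e.
Proof.
move=> dA dnu dn0 dnirr.
have [e He] : exists e, ~ (divisorsA A d e ->
                 unitA A e \/ exists u, unitA A u /\ e = d * u).
  apply: not_all_ex_not => Hd; apply: dnirr; do 3!split=> //.
  by move=> e; split; [exact: Hd | exact: trivial_divisorsA].
have [De /not_or_and [enu ena]] := imply_to_and _ _ He.
exists e; do 2!split=> //; move=> [c' [c'A ec']].
have [eA [c [cA dec]]] := De.
have en0 : e <> 0 := dvdA_neq0 De.2 dn0.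
by apply: ena; exists c'; split=> //; apply: (associate_unit en0 c'A cA ec' dec).
Qed.

(* Descent along proper divisors, bounded by the size of a list containing
   all divisors. *)
Lemma irreducible_divisor_bounded {n : nat} {d : C} {l : seq C} :
  d \in A -> ~ unitA A d -> d <> 0 ->
  (forall e, divisorsA A d e -> e \in l) -> (size l <= n)%N ->
  exists q, irreducibleA A q /\ dvdA A q d.
Proof.
elim: n d l => [|n IH] d l dA dnu dn0 hl hs.
  by move: (hl d (divisorsA_refl dA)); case: l hl hs.
case: (classic (irreducibleA A d)) => [dirr | dnirr].
  by exists d; split=> //; apply: dvdA_refl.
have [e [[eA ed] [enu nde]]] := proper_divisorA dA dnu dn0 dnirr.
pose l' := filter (predC (pred1 d)) l.
have hl' : forall f, divisorsA A e f -> f \in l'.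
  move=> f [fA fe]; rewrite mem_filter /= hl ?andbT; last first.
    by split=> //; apply: dvdA_trans fe ed.
  by apply/eqP=> fd; apply: nde; rewrite -fd.
have hs' : (size l' <= n)%N.
  have dl : (0 < count (pred1 d) l)%N.
    rewrite -has_count; apply/hasP; exists d => /=; last exact: eqxx.
    exact: hl (divisorsA_refl dA).
  by move: hs; rewrite size_filter -(count_predC (pred1 d) l); lia.
have [q [qirr qe]] := IH e l' eA enu (dvdA_neq0 ed dn0) hl' hs'.
by exists q; split=> //; apply: dvdA_trans qe ed.
Qed.

Lemma irreducible_divisor {d : C} : d \in A -> ~ unitA A d -> d <> 0 ->
  finite_set (divisorsA A d) -> exists q, irreducibleA A q /\ dvdA A q d.
Proof.
move=> dA dnu dn0 [l hl].
exact: (irreducible_divisor_bounded dA dnu dn0 hl (leqnn _)).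
Qed.

Lemma irreducibleA_same_divisors {q p : C} : irreducibleA A q -> p \in A ->
  (forall d, divisorsA A p d <-> divisorsA A q d) -> irreducibleA A p.
Proof.
move=> [qA [qnu [qn0 qirr]]] pA Dpq.
have [_ [u [uA pqu]]] : divisorsA A p q by apply/Dpq/divisorsA_refl.
have [_ [v [vA qpv]]] : divisorsA A q p by apply/Dpq/divisorsA_refl.
have pn0 : p <> 0 by move=> p0; apply: qn0; rewrite qpv p0 mul0r.
have uU : unitA A u := associate_unit pn0 uA vA pqu qpv.
have vU : unitA A v := associate_unit qn0 vA uA qpv pqu.
split=> //; split; first by move=> pU; apply: qnu; apply: unitA_dvd qA _ pU; exists u.
split=> // e; apply: iff_trans (Dpq e) _; apply: iff_trans (qirr e) _.
split; case=> [eU | [w [wU ->]]]; try by left.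
  by right; exists (v * w); split; [exact: unitA_mul | rewrite mulrA -qpv].
by right; exists (u * w); split; [exact: unitA_mul | rewrite mulrA -pqu].
Qed.

Lemma exprA {p : C} (k : nat) : p \in A -> p ^+ k \in A.
Proof. by move=> pA; elim: k => [|k IH]; rewrite ?expr0 // exprS mulA. Qed.

Lemma expA_inj {p : C} : p \in A -> p <> 0 -> ~ unitA A p ->
  injective (fun k : nat => p ^+ k).
Proof.
move=> pA pn0 pnu.
suff neq_lt : forall i j, (i < j)%N -> p ^+ i <> p ^+ j.
  move=> i j /= eij; case: (ltngtP i j) => // ij.
    by case: (neq_lt _ _ ij eij).
  by case: (neq_lt _ _ ij (esym eij)).
move=> i j ij eij; apply: pnu; split=> //; exists (p ^+ (j - i).-1).
split; first exact: exprA.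
rewrite -exprS prednK ?subn_gt0 //.
apply: (mulfI (x := p ^+ i)); first by rewrite expf_neq0 //; apply/eqP.
by rewrite -exprD subnKC ?(ltnW ij) // mulr1.
Qed.

Lemma powers_not_all_divide {p x : C} : p \in A -> p <> 0 -> ~ unitA A p ->
  x \in A -> finite_set (divisorsA A x) -> ~ (forall k, dvdA A (p ^+ k) x).
Proof.
move=> pA pn0 pnu xA [l hl] hall.
suff : (size (map (fun k => p ^+ k) (iota 0 (size l).+1)) <= size l)%N.
  by rewrite size_map size_iota ltnn.
apply: uniq_leq_size.
  by rewrite map_inj_uniq ?iota_uniq //; apply: expA_inj.
by move=> y /mapP [k _ ->]; apply: hl; split; [apply: exprA | apply: hall].
Qed.

Lemma max_power_divisor {p x : C} : p \in A -> p <> 0 -> ~ unitA A p ->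
  x \in A -> finite_set (divisorsA A x) ->
  exists n : nat, dvdA A (p ^+ n) x /\ ~ dvdA A (p ^+ n.+1) x.
Proof.
move=> pA pn0 pnu xA xfin; apply: NNPP => nomax.
apply: (powers_not_all_divide pA pn0 pnu xA xfin).
elim=> [|n IH]; first by exists x; rewrite expr0 mul1r.
by apply: NNPP => Hn; apply: nomax; exists n.
Qed.

End Divisibility.

Theorem corollary5p4 (C : numClosedFieldType) (F : pred C) (nrm : C -> C)
    (A : pred C) (N : C -> C) :
  setting F nrm A N ->
  (exists p, primeA A N p) ->
  finite_set (unitA A) ->
  forall x : C, x \in A -> ~ unitA A x -> x <> 0 ->
    finite_set (divisorsA A x) ->
    exists p (n : nat) a,
      primeA A N p /\ (1 <= n)%N /\ a \in A /\ a <> 0 /\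
      x = a * p ^+ n /\ ~ dvdA A p a.
Proof.
move=> [_ [_ [[_ [_ [A1 [_ [_ mulA]]]]] [_ [_ [NA [Ndiv [NN _]]]]]]]] _ _.
move=> x xA xnu xn0 xfin.
have [q [qirr qx]] := irreducible_divisor A1 mulA xA xnu xn0 xfin.
have qA : q \in A by case: qirr.
have pirr : irreducibleA A (N q) :=
  irreducibleA_same_divisors A1 mulA qirr (NA q qA) (Ndiv q qA).
have [pA [pnu [pn0 _]]] := pirr.
have px : dvdA A (N q) x.
  by have [_ pq] := (Ndiv q qA (N q)).1 (divisorsA_refl A1 (NA q qA));
     apply: dvdA_trans pq qx.
have [n [[a [aA xpa]] nmax]] := max_power_divisor A1 mulA pA pn0 pnu xA xfin.
exists (N q), n, a; split; first by split; [exact: pirr | exact: NN].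
split; first by case: n xpa nmax => // _; rewrite expr1.
split; first exact: aA.
split; first by move=> a0; apply: xn0; rewrite xpa a0 mulr0.
split; first by rewrite mulrC.
move=> [b [bA ab]]; apply: nmax; exists b; split=> //.
by rewrite exprSr -mulrA -ab -xpa.
Qed.
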